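(* Let $G$ be a $2K_2$-free graph, let $a,b$ be adjacent vertices of $G$, and let $X$ be a minimal dominating set of $G$ with $a,b\in X$ and $|X|>\alpha(G)$. Let $A$ be the set of vertices not in $\{a,b\}$ adjacent to neither $a$ nor $b$, let $N$ be the set of vertices not in $\{a,b\}$ adjacent to at least one of $a,b$, let $Y=X\cap N$, and let $Z$ be the set of vertices of $A$ having at least one neighbour in $Y$. Suppose $|Y|>1$. If $a^*\notin X$ is a private neighbour of $a$ and $b^*\notin X$ is a private neighbour of $b$ (with respect to $X$), then neither $a^*$ nor $b^*$ has a neighbour in $Z$.
   Context: All graphs are finite, simple and undirected. $2K_2$-free means no induced subgraph isomorphic to the disjoint union of two edges. $\alpha(G)$ is the maximum size of an independent set of $G$. A dominating set is a vertex set $D$ such that every vertex outside $D$ has a neighbour in $D$; it is minimal if no proper subset is dominating. Given a dominating set $D$ and $x\in D$, a vertex $y\notin D$ is a private neighbour of $x$ if $x$ is the only neighbour of $y$ in $D$. *)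

From mathcomp Require Import all_boot.
Set Implicit Arguments. Unset Strict Implicit. Unset Printing Implicit Defensive.

Definition simple_graph (T : finType) (e : rel T) : Prop :=
  symmetric e /\ irreflexive e.

Definition twoK2_free (T : finType) (e : rel T) : Prop :=
  forall x1 y1 x2 y2 : T,
    e x1 y1 -> e x2 y2 -> uniq [:: x1; y1; x2; y2] ->
    [|| e x1 x2, e x1 y2, e y1 x2 | e y1 y2].

Definition independent (T : finType) (e : rel T) (S : {set T}) : bool :=
  [forall x in S, forall y in S, ~~ e x y].

Definition alpha (T : finType) (e : rel T) : nat :=
  \max_(S : {set T} | independent e S) #|S|.

Definition dominating (T : finType) (e : rel T) (D : {set T}) : bool :=
  [forall y, (y \notin D) ==> [exists x in D, e x y]].

Definition minimal_dominating (T : finType) (e : rel T) (D : {set T}) : bool :=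
  dominating e D && [forall D' : {set T}, (D' \proper D) ==> ~~ dominating e D'].

Definition private_nb (T : finType) (e : rel T) (D : {set T}) (x y : T) : bool :=
  (y \notin D) && e x y && [forall z in D, e z y ==> (z == x)].

(** A vertex [z] of [A] outside [X] must be the private neighbour of some
    [y0] in [X]: otherwise sending [a] to itself, [b] to [z], each vertex
    of [X] in [A] to itself and each vertex of [Y] to one of its private
    neighbours in [A] maps [X] injectively into [{a} u A], which is
    independent by 2K2-freeness across the edge [ab]; so [|X| <= alpha].
    If now [a* z] were an edge (so [z] is outside [X]), take [y] in [Y]
    other than [y0] and its private neighbour [v] in [A]. Four applications
    of 2K2-freeness give in turn [a y], [a* v], a non-edge [b y0] and an
    edge [z b*], and then the edges [a y] and [b* z] form an induced 2K2.
    Hence [Y = {y0}], contradicting [|Y| > 1]. *)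
From mathcomp Require Import all_boot.
Set Implicit Arguments. Unset Strict Implicit. Unset Printing Implicit Defensive.

Lemma private_nbP (T : finType) (e : rel T) (X : {set T}) x v :
  reflect [/\ v \notin X, e x v & {in X, forall w, e w v -> w = x}]
          (private_nb e X x v).
Proof.
apply: (iffP andP) => [[/andP[vX exv] /forall_inP owner]|[vX exv owner]].
  by split=> // w wX ewv; apply/eqP/(implyP (owner w wX)).
rewrite vX exv; split=> //.
by apply/forall_inP => w wX; apply/implyP => /(owner w wX)->.
Qed.

Lemma private_nb_nonadj (T : finType) (e : rel T) (X : {set T}) x v w :
  private_nb e X x v -> w \in X -> w != x -> ~~ e w v.
Proof. by case/private_nbP=> _ _ owner wX; apply: contra => /(owner w wX)->. Qed.

Lemma independent_card_le_alpha (T : finType) (e : rel T) (S : {set T}) :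
  independent e S -> #|S| <= alpha e.
Proof. exact: (leq_bigmax_cond (P := independent e)). Qed.

Section TwoK2Free.

Variables (T : finType) (e : rel T).
Hypotheses (e_sym : symmetric e) (e_irr : irreflexive e) (e_2K2 : twoK2_free e).

(* The distinctness of the four vertices follows from the non-edges. *)
Lemma no_induced_2K2 x1 y1 x2 y2 : e x1 y1 -> e x2 y2 ->
  ~~ e x1 x2 -> ~~ e x1 y2 -> ~~ e y1 x2 -> ~~ e y1 y2 -> False.
Proof.
move=> e1 e2 n11 n12 n21 n22.
have neq_edge x y : e x y -> x != y by apply: contraTneq => ->; rewrite e_irr.
have x1x2 : x1 != x2 by apply: contraNneq n12 => ->.
have x1y2 : x1 != y2 by apply: contraNneq n22 => <-; rewrite e_sym.
have y1x2 : y1 != x2 by apply: contraNneq n11 => <-.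
have y1y2 : y1 != y2 by apply: contraNneq n12 => <-.
have U : uniq [:: x1; y1; x2; y2].
  by rewrite /= !inE !negb_or neq_edge // x1x2 x1y2 y1x2 y1y2 neq_edge.
by have := e_2K2 e1 e2 U; rewrite (negbTE n11) (negbTE n12) (negbTE n21) (negbTE n22).
Qed.

Variables (a b : T).
Hypothesis e_ab : e a b.

Lemma neq_ab : a != b.
Proof. by apply: contraTneq e_ab => ->; rewrite e_irr. Qed.

Definition far v := (v != a) && (v != b) && ~~ e a v && ~~ e b v.
Definition near v := (v != a) && (v != b) && (e a v || e b v).

Lemma far_nonadj u v : far u -> far v -> ~~ e u v.
Proof.
case/andP=> /andP[_ nau] nbu /andP[/andP[_ nav] nbv].
by apply/negP => euv; apply: (no_induced_2K2 e_ab euv).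
Qed.

Lemma independent_a_far : independent e [set v | (v == a) || far v].
Proof.
apply/forall_inP => u; rewrite inE => /orP[/eqP-> | faru];
  apply/forall_inP => v; rewrite inE => /orP[/eqP-> | farv].
- by rewrite e_irr.
- by case/andP: farv => /andP[].
- by rewrite e_sym; case/andP: faru => /andP[].
- exact: far_nonadj.
Qed.

Variable X : {set T}.
Hypotheses (X_min : minimal_dominating e X) (aX : a \in X) (bX : b \in X).

Lemma near_private_far x : x \in X -> near x ->
  exists v, private_nb e X x v && far v.
Proof.
case/andP: X_min => /forallP X_dom /forallP X_minimal xX /andP[/andP[xa xb] adjx].
have := X_minimal (X :\ x); rewrite properD1 //= => /forallPn[v].
rewrite negb_imply in_setD1 negb_and negbK => /andP[vXx /exists_inPn undominated].
have nonadj w : w \in X -> w != x -> ~~ e w v.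
  by move=> wX wx; apply: undominated; rewrite in_setD1 wx.
have vx : v != x.
  by apply: contraTneq adjx => <-; rewrite negb_or !nonadj // eq_sym.
have vX : v \notin X by rewrite (negbTE vx) in vXx.
have /exists_inP[w wX ewv] := implyP (X_dom v) vX.
have exv : e x v.
  by have /eqP<- : w == x := contraTT (nonadj w wX) ewv.
exists v; apply/andP; split.
  apply/private_nbP; split=> //.
  by move=> u uX euv; apply/eqP; exact: contraTT (nonadj u uX) euv.
have va : v != a by apply: contraNneq vX => ->.
have vb : v != b by apply: contraNneq vX => ->.
by rewrite /far va vb !nonadj // eq_sym.
Qed.

Lemma far_owner z : alpha e < #|X| -> far z -> z \notin X ->
  exists2 y, y \in X & private_nb e X y z.
Proof.
move=> alphaX farz zX; apply/exists_inP; apply: contraLR alphaX => /exists_inPn unowned.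
rewrite -leqNgt.
pose I := [set v | (v == a) || far v].
pose h x := if x == b then z else odflt x [pick v | private_nb e X x v && far v].
pose g v := if v == z then b else if v \in X then v else odflt v [pick w in X | e w v].
have hP x : x \in X -> h x \in I /\ g (h x) = x.
  move=> xX; rewrite /h; case: eqP => [->|/eqP xb].
    by rewrite inE farz orbT /g eqxx.
  case: pickP => [v /andP[pv farv]|none] /=.
    have /private_nbP[vX exv owner] := pv.
    have vz : v != z by apply: contraNneq (unowned x xX) => <-.
    split; first by rewrite inE farv orbT.
    rewrite /g (negbTE vz) (negbTE vX).
    by case: pickP => [w /andP[wX /(owner w wX)] //|/(_ x)]; rewrite xX exv.
  have xz : x != z by apply: contraNneq zX => <-.
  split; last by rewrite /g (negbTE xz) xX.
  rewrite inE; case: (eqVneq x a) => //= xa.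
  case: (boolP (e a x || e b x)) => adjx.
    have nearx : near x by rewrite /near xa xb adjx.
    by have [v] := near_private_far xX nearx; rewrite none.
  by move: adjx; rewrite negb_or /far xa xb.
have h_inj : {in X &, injective h}.
  by move=> x1 x2 /hP[_ g1] /hP[_ g2] h12; rewrite -g1 h12 g2.
rewrite -(card_in_imset h_inj).
apply: leq_trans (independent_card_le_alpha independent_a_far).
by apply/subset_leq_card/subsetP => _ /imsetP[x /hP[hI _] ->].
Qed.

Lemma far_edge_nonadj_b astar w y : private_nb e X a astar -> far w -> e astar w ->
  y \in X -> y != a -> ~~ e y w -> ~~ e b y.
Proof.
move=> pa farw eaw yX ya nyw; apply/negP => eby.
apply: (no_induced_2K2 eby eaw) nyw.
- by apply: private_nb_nonadj pa bX _; rewrite eq_sym neq_ab.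
- by case/andP: farw.
- exact: private_nb_nonadj pa yX ya.
Qed.

Lemma near_eq_owner astar bstar z y0 y :
  private_nb e X a astar -> private_nb e X b bstar -> far z -> e astar z ->
  y0 \in X -> private_nb e X y0 z -> y \in X -> near y -> y = y0.
Proof.
move=> pa pb farz eaz y0X pz yX neary; case: (eqVneq y y0) => // yy0; exfalso.
have /private_nbP[_ ey0z owner] := pz.
have /andP[/andP[/andP[_ _] naz] nbz] := farz.
have /andP[/andP[ya yb] adjy] := neary.
have y0a : y0 != a by apply: contraTneq ey0z => ->.
have y0b : y0 != b by apply: contraTneq ey0z => ->.
have nyz : ~~ e y z by apply: contra yy0 => /(owner y yX)->.
have nby : ~~ e b y := far_edge_nonadj_b pa farz eaz yX ya nyz.
have eay : e a y by rewrite (negbTE nby) orbF in adjy.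
have [v /andP[pv farv]] := near_private_far yX neary.
have /private_nbP[_ eyv _] := pv.
have eav : e astar v.
  apply/negPn/negP => nav; apply: (no_induced_2K2 eaz eyv _ nav).
  - by rewrite e_sym (private_nb_nonadj pa yX ya).
  - by rewrite e_sym.
  - exact: far_nonadj.
have nby0 : ~~ e b y0.
  apply: (far_edge_nonadj_b pa farv eav y0X y0a).
  by apply: private_nb_nonadj pv y0X _; rewrite eq_sym.
have /private_nbP[_ ebb _] := pb.
have ezb : e z bstar.
  apply/negPn/negP => nzb; apply: (no_induced_2K2 ey0z ebb _ _ _ nzb).
  - by rewrite e_sym.
  - exact: private_nb_nonadj pb y0X y0b.
  - by rewrite e_sym.
apply: (no_induced_2K2 eay ezb naz _ nyz).
- exact: private_nb_nonadj pb aX neq_ab.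
- exact: private_nb_nonadj pb yX yb.
Qed.

Lemma private_far_nonadj astar bstar z y1 y2 : alpha e < #|X| ->
  private_nb e X a astar -> private_nb e X b bstar -> far z ->
  y1 \in X -> near y1 -> y2 \in X -> near y2 -> y1 != y2 -> ~~ e astar z.
Proof.
move=> alphaX pa pb farz y1X near1 y2X near2; apply: contra => eaz.
have zX : z \notin X.
  have /private_nbP[_ _ owner] := pa.
  have /andP[/andP[/andP[za _] _] _] := farz.
  by apply: contra za => zX; rewrite (owner z zX) ?eqxx // e_sym.
have [y0 y0X pz] := far_owner alphaX farz zX.
rewrite (near_eq_owner pa pb farz eaz y0X pz y1X) //.
by rewrite (near_eq_owner pa pb farz eaz y0X pz y2X).
Qed.

End TwoK2Free.

Lemma farC (T : finType) (e : rel T) a b : far e a b =1 far e b a.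
Proof. by move=> v; rewrite /far (andbC (v != a)) -!andbA (andbC (~~ e a v)). Qed.

Lemma nearC (T : finType) (e : rel T) a b : near e a b =1 near e b a.
Proof. by move=> v; rewrite /near (andbC (v != a)) orbC. Qed.

Theorem claim5 (T : finType) (e : rel T) (a b : T) (X : {set T}) (astar bstar : T) :
  simple_graph e -> twoK2_free e -> e a b ->
  minimal_dominating e X -> a \in X -> b \in X -> alpha e < #|X| ->
  let A := [set v | (v != a) && (v != b) && ~~ e a v && ~~ e b v] in
  let N := [set v | (v != a) && (v != b) && (e a v || e b v)] in
  let Y := X :&: N in
  let Z := [set v in A | [exists y in Y, e v y]] in
  1 < #|Y| ->
  astar \notin X -> private_nb e X a astar ->
  bstar \notin X -> private_nb e X b bstar ->
  forall z, z \in Z -> ~~ e astar z /\ ~~ e bstar z.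
Proof.
move=> [e_sym e_irr] e_2K2 e_ab X_min aX bX alphaX A N Y Z Y_gt1 _ pa _ pb z.
rewrite !inE => /andP[farz _].
have [y1 [y2 [y1Y y2Y y12]]] := card_gt1P Y_gt1.
move: y1Y y2Y; rewrite !inE => /andP[y1X near1] /andP[y2X near2].
have e_ba : e b a by rewrite e_sym.
split.
  exact: (private_far_nonadj e_sym e_irr e_2K2 e_ab X_min aX bX alphaX pa pb farz
          y1X near1 y2X near2 y12).
apply: (private_far_nonadj e_sym e_irr e_2K2 e_ba X_min bX aX alphaX pb pa _
        y1X _ y2X _ y12); by [rewrite farC | rewrite nearC].
Qed.
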